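(* Let $F$ be a field of characteristic $2$, let $q$ be a totally singular quadratic form over $F$ and let $L/F$ be a finite field extension. Then $N_{L/F}(G_L(q_L))\subseteq G_F(q)$.
   Context: $N_{L/F}:L\to F$ is the field norm. For a form $\psi$ over a field $E$, $G_E(\psi)=\{c\in E^*:\psi\cong c\psi\}$; if $\psi$ is a zero form (all values $0$) or has dimension $0$, then $G_E(\psi)=E^*$. A totally singular quadratic form is one isometric to $\sum a_ix_i^2$. *)

From HB Require Import structures.
From mathcomp Require Import all_boot all_order all_algebra all_field.
Set Implicit Arguments. Unset Strict Implicit. Unset Printing Implicit Defensive.
Import GRing.Theory.
Local Open Scope ring_scope.

Definition fieldNorm (F : fieldType) (L : fieldExtType F) (x : L) : F :=
  \det (passmx.mxof (vbasis {:L}) (vbasis {:L}) (amulr x)).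

Definition tsform (K : fieldType) (n : nat) (a : 'I_n -> K) (x : 'rV[K]_n) : K :=
  \sum_(i < n) a i * x 0 i ^+ 2.

Definition ts_isometric (K : fieldType) (n : nat) (a b : 'I_n -> K) : Prop :=
  exists2 M : 'M[K]_n, M \in unitmx & forall x : 'rV[K]_n, tsform b (x *m M) = tsform a x.

Definition simFactor (K : fieldType) (n : nat) (a : 'I_n -> K) (c : K) : Prop :=
  c != 0 /\ ts_isometric a (fun i => c * a i).

From HB Require Import structures.
From mathcomp Require Import all_boot all_order all_algebra all_field.
Set Implicit Arguments. Unset Strict Implicit. Unset Printing Implicit Defensive.
Import GRing.Theory.
Local Open Scope ring_scope.
Import passmx.

(* Over a field K of characteristic 2 the form q = <a_1,...,a_n> is additive,
   and its value set V(q) = { sum_j f_j^2 a_j } is a K^2-subspace of K.  Call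
   x a multiplier of q when x a_j lies in V(q) for every j.  We show:
   (1) c is a similarity factor of q iff c <> 0 and both c and c^-1 are
       multipliers (the "if" part builds an invertible isometry out of two
       possibly singular maps between q and cq);
   (2) the multipliers form a subring containing K^2, so they contain the
       determinant of any matrix whose entries are multipliers;
   (3) for L/F finite and a multiplier c of q_L, N(c) is a multiplier of q.
       If the squares of an F-basis of L again form a basis, the matrix of
       multiplication by c in that basis has multiplier entries.  Otherwise
       the F-span S of L^2 is a proper subfield containing c; for g outside S,
       L = U + Ug with U an S-space, so N(c) is a square.
   The corollary follows from (1) and (3) applied to c and c^-1, using the
   multiplicativity of the norm. *)

Section Char2.
Variable R : comPzRingType.
Hypothesis two0 : (2%:R : R) = 0.

Lemma addxx_char2 (x : R) : x + x = 0.
Proof. by rewrite -mulr2n -mulr_natr two0 mulr0. Qed.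

Lemma oppr_char2 (x : R) : - x = x.
Proof. by apply/eqP; rewrite eq_sym -addr_eq0 addxx_char2. Qed.

Lemma sqrD_char2 (x y : R) : (x + y) ^+ 2 = x ^+ 2 + y ^+ 2.
Proof. by rewrite sqrrD -mulr_natr two0 mulr0 addr0. Qed.

Lemma sqr_sum_char2 (I : Type) (r : seq I) (P : pred I) (f : I -> R) :
  (\sum_(i <- r | P i) f i) ^+ 2 = \sum_(i <- r | P i) f i ^+ 2.
Proof.
apply: (big_rec2 (fun x y => x ^+ 2 = y)); first by rewrite expr0n.
by move=> i x y _ <-; rewrite sqrD_char2.
Qed.
End Char2.

Lemma char2_fieldExt (F : fieldType) {L : fieldExtType F} :
  (2%:R : F) = 0 -> (2%:R : L) = 0.
Proof. by move=> two0; rewrite -(rmorph_nat (in_alg L)) /= two0 scale0r. Qed.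

Section TotallySingular.
Variable K : fieldType.
Hypothesis two0 : (2%:R : K) = 0.
Variable n : nat.
Implicit Types (a b : 'I_n -> K).

Lemma tsformD b x y : tsform b (x + y) = tsform b x + tsform b y.
Proof.
rewrite /tsform -big_split /=; apply: eq_bigr => i _.
by rewrite mxE (sqrD_char2 two0) mulrDr.
Qed.

Lemma tsformN b x : tsform b (- x) = tsform b x.
Proof. by apply: eq_bigr => i _; rewrite mxE sqrrN. Qed.

Lemma tsform_mulmx b x (M : 'M[K]_n) :
  tsform b (x *m M) = \sum_i x 0 i ^+ 2 * \sum_j b j * M i j ^+ 2.
Proof.
rewrite /tsform.
under eq_bigr => j _ do rewrite mxE (sqr_sum_char2 two0) big_distrr /=.
rewrite exchange_big /=; apply: eq_bigr => i _; rewrite big_distrr /=.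
by apply: eq_bigr => j _; rewrite exprMn mulrCA mulrA.
Qed.

Lemma tsform_delta b i : tsform b (delta_mx 0 i) = b i.
Proof.
rewrite /tsform (bigD1 i) //= mxE !eqxx expr1n mulr1 big1 ?addr0 //.
by move=> k /negPf nk; rewrite mxE nk andbF expr0n mulr0.
Qed.

Lemma tsform_rows a b (M : 'M[K]_n) :
  (forall x, tsform b (x *m M) = tsform a x) ->
  forall i, a i = \sum_j b j * M i j ^+ 2.
Proof.
move=> hM i; rewrite -[a i](tsform_delta a i) -hM tsform_mulmx.
rewrite (bigD1 i) //= mxE !eqxx expr1n mul1r [X in _ + X]big1 ?addr0 //.
by move=> k /negPf nk; rewrite mxE nk andbF expr0n mul0r.
Qed.

(* Write
   A = Lm diag(1_r, 0) Rm and C = Lm diag(0, 1) Rm; then A + C - CBA is an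
   isometry (q_b(xC) and q_b(xCBA) = q_b(xC) cancel in characteristic 2)
   and equals Lm (1 - N) Rm with N^2 = 0, so it is invertible. *)
Lemma isometric_of_maps a b (A B : 'M[K]_n) :
  (forall x, tsform b (x *m A) = tsform a x) ->
  (forall y, tsform a (y *m B) = tsform b y) ->
  ts_isometric a b.
Proof.
move=> hA hB.
set Lm := col_ebase A; set Rm := row_ebase A; set r := \rank A.
set C := Lm *m copid_mx r *m Rm.
exists (A + C - C *m B *m A); last first.
  move=> x; rewrite !mulmxDr mulmxN !tsformD tsformN.
  by rewrite hA !mulmxA hA hB -addrA addxx_char2 // addr0.
pose N : 'M[K]_n := copid_mx r *m (Rm *m B *m Lm) *m pid_mx r.
have M_factor : A + C - C *m B *m A = Lm *m (1%:M - N) *m Rm.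
  rewrite /C /N -{1 2}[A]mulmx_ebase /copid_mx.
  rewrite !mulmxBr !mulmxBl !mulmx1 !mul1mx !mulmxA -!mulmxA.
  rewrite [X in X - _]addrC subrK.
  by congr (_ - _); rewrite mulmxBl mulmxBr !mulmxA.
have N_nilp : N *m N = 0.
  rewrite /N -!mulmxA [pid_mx r *m _]mulmxA.
  by rewrite [pid_mx r *m copid_mx r]mul_pid_mx_copid ?rank_leq_row // !(mul0mx, mulmx0).
rewrite M_factor !unitmx_mul col_ebase_unit row_ebase_unit andbT /=.
apply: (proj1 (@mulmx1_unit _ _ _ (1%:M + N) _)).
by rewrite mulmxDr mulmx1 mulmxBl mul1mx N_nilp subr0 subrK.
Qed.

Definition ts_value a (v : K) := exists f : 'I_n -> K, v = \sum_j f j ^+ 2 * a j.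

Definition ts_mult a (x : K) := forall j, ts_value a (x * a j).

Section Values.
Variable a : 'I_n -> K.

Lemma ts_value0 : ts_value a 0.
Proof. by exists (fun _ => 0); rewrite big1 // => j _; rewrite expr0n mul0r. Qed.

Lemma ts_value_coef j : ts_value a (a j).
Proof.
exists (fun k => (k == j)%:R); rewrite (bigD1 j) //= eqxx expr1n mul1r big1 ?addr0 //.
by move=> k /negPf ->; rewrite expr0n mul0r.
Qed.

Lemma ts_valueD u v : ts_value a u -> ts_value a v -> ts_value a (u + v).
Proof.
move=> [f ->] [g ->]; exists (fun j => f j + g j); rewrite -big_split /=.
by apply: eq_bigr => j _; rewrite (sqrD_char2 two0) mulrDl.
Qed.

Lemma ts_valueZ s v : ts_value a v -> ts_value a (s ^+ 2 * v).
Proof.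
move=> [f ->]; exists (fun j => s * f j); rewrite big_distrr /=.
by apply: eq_bigr => j _; rewrite exprMn mulrA.
Qed.

Lemma ts_value_sum (I : Type) (r : seq I) (P : pred I) (F : I -> K) :
  (forall i, P i -> ts_value a (F i)) -> ts_value a (\sum_(i <- r | P i) F i).
Proof. by move=> h; apply: big_ind => //; [exact: ts_value0 | exact: ts_valueD]. Qed.

Lemma ts_mult0 : ts_mult a 0.
Proof. by move=> j; rewrite mul0r; exact: ts_value0. Qed.

Lemma ts_mult1 : ts_mult a 1.
Proof. by move=> j; rewrite mul1r; exact: ts_value_coef. Qed.

Lemma ts_multD x y : ts_mult a x -> ts_mult a y -> ts_mult a (x + y).
Proof. by move=> hx hy j; rewrite mulrDl; apply: ts_valueD. Qed.

Lemma ts_multN x : ts_mult a x -> ts_mult a (- x).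
Proof. by rewrite (oppr_char2 two0). Qed.

Lemma ts_multM x y : ts_mult a x -> ts_mult a y -> ts_mult a (x * y).
Proof.
move=> hx hy j; rewrite -mulrA; have [f ->] := hy j; rewrite big_distrr /=.
by apply: ts_value_sum => k _; rewrite mulrCA; apply: ts_valueZ; exact: hx.
Qed.

Lemma ts_mult_sqr z : ts_mult a (z ^+ 2).
Proof. by move=> j; apply: ts_valueZ; exact: ts_value_coef. Qed.

(* Being a subring, the multipliers are closed under determinants. *)
Lemma ts_mult_det m (B : 'M[K]_m) : (forall i j, ts_mult a (B i j)) -> ts_mult a (\det B).
Proof.
move=> hB; apply: big_ind; [exact: ts_mult0 | exact: ts_multD |] => s _.
apply: ts_multM; last by apply: big_ind; [exact: ts_mult1 | exact: ts_multM |].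
by case: (perm.odd_perm s); rewrite ?expr1 ?expr0; [apply: ts_multN|]; exact: ts_mult1.
Qed.

Lemma ts_mult_of_simFactor c : simFactor a c -> ts_mult a c /\ ts_mult a c^-1.
Proof.
move=> [cnz [M Mu hM]]; split=> i.
  have hMV x : tsform a (x *m invmx M) = tsform (fun j => c * a j) x.
    by rewrite -hM mulmxKV.
  exists (fun j => invmx M i j); rewrite (tsform_rows hMV).
  by apply: eq_bigr => j _; rewrite mulrC.
exists (fun j => M i j); rewrite (tsform_rows hM) big_distrr /=.
by apply: eq_bigr => j _; rewrite mulrA [c^-1 * _]mulrA mulVf // mul1r mulrC.
Qed.

Lemma simFactor_of_mult d : d != 0 -> ts_mult a d -> ts_mult a d^-1 -> simFactor a d.
Proof.
move=> dnz /fin_all_exists[f hf] /fin_all_exists[h hh]; split=> //.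
apply: (@isometric_of_maps a _ (\matrix_(i, j) h i j) (\matrix_(i, j) f i j)).
  move=> x; rewrite tsform_mulmx; apply: eq_bigr => i _; rewrite mulrC; congr (_ * _).
  rewrite -[a i](mulVKf dnz) hh big_distrr /=; apply: eq_bigr => j _.
  by rewrite mxE -mulrA [X in _ * X]mulrC.
move=> y; rewrite tsform_mulmx; apply: eq_bigr => i _; rewrite mulrC; congr (_ * _).
by rewrite hf; apply: eq_bigr => j _; rewrite mxE mulrC.
Qed.

End Values.
End TotallySingular.

Section FieldNorm.
Variables (F : fieldType) (L : fieldExtType F).
Local Notation m := (\dim {:L}).

Lemma mxof_entry (b : m.-tuple L) (f : 'End(L)) i j :
  mxof b b f i j = coord b j (f b`_i).
Proof. by rewrite /mxof !mxE /= vecof_delta. Qed.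

Lemma det_mxof_basis (b b' : m.-tuple L) (f : 'End(L)) :
  basis_of fullv b -> basis_of fullv b' ->
  \det (mxof b b f) = \det (mxof b' b' f).
Proof.
move=> bB bB'.
have f_id : f = (\1 \o f \o \1)%VF by apply/lfunP => u; rewrite !comp_lfunE !id_lfunE.
rewrite [in LHS]f_id (mxof_comp b b bB') (mxof_comp b' b bB').
have base_change : mxof b b' \1 *m mxof b' b \1 = 1%:M.
  by rewrite -(mxof_comp b b bB') comp_lfun1l mxof1 // (basis_free bB).
by rewrite !det_mulmx mulrCA -det_mulmx base_change det1 mulr1.
Qed.

Lemma fieldNorm_basis (b : m.-tuple L) (c : L) :
  basis_of fullv b -> fieldNorm c = \det (mxof b b (amulr c)).
Proof. by move=> bB; rewrite /fieldNorm (det_mxof_basis _ (vbasisP _) bB). Qed.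

Lemma fieldNormM (x y : L) : fieldNorm (x * y) = fieldNorm x * fieldNorm y.
Proof.
rewrite /fieldNorm; have -> : amulr (x * y) = (amulr y \o amulr x)%VF.
  by apply/lfunP => u; rewrite comp_lfunE !lfunE /= mulrA.
by rewrite (mxof_comp _ _ (vbasisP _)) det_mulmx mulrC.
Qed.

Lemma fieldNorm1 : fieldNorm (1 : L) = 1.
Proof.
rewrite /fieldNorm; have -> : amulr (1 : L) = \1%VF.
  by apply/lfunP => u; rewrite !lfunE /= mulr1.
by rewrite mxof1 ?det1 // (basis_free (vbasisP _)).
Qed.

Lemma fieldNormV (c : L) : c != 0 ->
  fieldNorm c != 0 /\ fieldNorm c^-1 = (fieldNorm c)^-1.
Proof.
move=> cnz; have NcNcV : fieldNorm c * fieldNorm c^-1 = 1.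
  by rewrite -fieldNormM mulfV // fieldNorm1.
have Ncnz : fieldNorm c != 0.
  by apply: contra_eq_neq NcNcV => ->; rewrite mul0r eq_sym oner_neq0.
by split=> //; apply: (mulfI Ncnz); rewrite NcNcV mulfV.
Qed.

End FieldNorm.

Lemma det_block_diag (R : comPzRingType) k u (A : 'M[R]_k) (q : 'M[R]_u)
    (hk : k = (u + u)%N) :
  let lsh := fun i : 'I_u => cast_ord (esym hk) (lshift u i) in
  let rsh := fun i : 'I_u => cast_ord (esym hk) (rshift u i) in
  (forall i j, A (lsh i) (lsh j) = q i j) ->
  (forall i j, A (lsh i) (rsh j) = 0) ->
  (forall i j, A (rsh i) (lsh j) = 0) ->
  (forall i j, A (rsh i) (rsh j) = q i j) ->
  \det A = \det q ^+ 2.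
Proof.
subst k => lsh rsh h1 h2 h3 h4.
have -> : A = block_mx q 0 0 q.
  apply/matrixP => i j.
  case: (splitP i) => i0 hi; [have -> : i = lshift u i0 by apply: val_inj
                               | have -> : i = rshift u i0 by apply: val_inj];
  case: (splitP j) => j0 hj; [have -> : j = lshift u j0 by apply: val_inj
                               | have -> : j = rshift u j0 by apply: val_inj
                               | have -> : j = lshift u j0 by apply: val_inj
                               | have -> : j = rshift u j0 by apply: val_inj].
  - by rewrite block_mxEul -h1 /lsh !cast_ord_id.
  - by rewrite block_mxEur mxE -(h2 i0 j0) /lsh /rsh !cast_ord_id.
  - by rewrite block_mxEdl mxE -(h3 i0 j0) /lsh /rsh !cast_ord_id.
  - by rewrite block_mxEdr -h4 /rsh !cast_ord_id.
by rewrite det_ublock expr2.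
Qed.

(* If L = U + Ug is a direct sum with U stable under multiplication by c,
   then in a basis (u_i) ++ (u_i g) the matrix of c is diag(q, q), so
   N(c) is a square. *)
Section SplitNorm.
Variables (F : fieldType) (L : fieldExtType F) (U : {vspace L}) (g c : L).
Hypotheses (gnz : g != 0) (dxU : (U :&: U * <[g]> = 0)%VS)
  (dimL : \dim {:L} = (\dim U + \dim U)%N) (cU : forall v, v \in U -> v * c \in U).

Let b1 := vbasis U.
Let b2 := [seq x * g | x <- b1].

Let size_adapted : size (b1 ++ b2) == \dim {:L}.
Proof. by rewrite size_cat size_map size_tuple dimL. Qed.

Let bt := Tuple size_adapted.

Let adapted_basis : basis_of fullv bt.
Proof.
have span_b1 : <<b1>>%VS = U := span_basis (vbasisP U).
have span_b2 : <<b2>>%VS = (U * <[g]>)%VS.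
  have := limg_amulr U g; rewrite -{1}span_b1 limg_span => <-.
  by congr <<_>>%VS; apply: eq_map => x; rewrite lfunE.
have free_b2 : free b2.
  apply: (@basis_free _ _ (U * <[g]>)%VS).
  by rewrite basisEdim span_b2 subvv size_map size_tuple (dim_cosetv _ gnz) /=.
rewrite basisEfree cat_free (basis_free (vbasisP U)) free_b2 span_b1 span_b2.
rewrite subvf (eqP size_adapted) leqnn; apply/and3P; split=> //.
exact/directv_addP.
Qed.

Lemma fieldNorm_split_square : exists z : F, fieldNorm c = z ^+ 2.
Proof.
pose u := \dim U; rewrite (fieldNorm_basis c adapted_basis).
pose q : 'M[F]_u := \matrix_(i, k) coord b1 k (b1`_i * c).
exists (\det q).
pose lsh := fun i : 'I_u => cast_ord (esym dimL) (lshift u i).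
pose rsh := fun i : 'I_u => cast_ord (esym dimL) (rshift u i).
have bt_lsh (i : 'I_u) : bt`_(lsh i) = b1`_i by rewrite /= nth_cat size_tuple ltn_ord.
have bt_rsh (i : 'I_u) : bt`_(rsh i) = b1`_i * g.
  rewrite /= nth_cat size_tuple ltnNge leq_addr /= addKn.
  by rewrite (nth_map 0) // size_tuple.
have coord_lsh (k : 'I_u) j : coord bt j b1`_k = (lsh k == j)%:R.
  by rewrite -bt_lsh coord_free ?(basis_free adapted_basis).
have coord_rsh (k : 'I_u) j : coord bt j (b1`_k * g) = (rsh k == j)%:R.
  by rewrite -bt_rsh coord_free ?(basis_free adapted_basis).
have mul_c (i : 'I_u) : b1`_i * c = \sum_k q i k *: b1`_k.
  have b1U : b1`_i \in U by apply: vbasis_mem; rewrite mem_nth // size_tuple.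
  by rewrite {1}(coord_vbasis (cU b1U)); apply: eq_bigr => k _; rewrite mxE.
have mul_c_g (i : 'I_u) : b1`_i * g * c = \sum_k q i k *: (b1`_k * g).
  by rewrite mulrAC mul_c mulr_suml; apply: eq_bigr => k _; rewrite scalerAl.
have entry x y : mxof bt bt (amulr c) x y = coord bt y (bt`_x * c).
  by rewrite mxof_entry lfunE.
apply: (det_block_diag (hk := dimL)) => i j; rewrite entry.
- rewrite bt_lsh mul_c linear_sum (bigD1 j) //= linearZ /= coord_lsh eqxx mulr1.
  rewrite big1 ?addr0 // => k kj; rewrite linearZ /= coord_lsh.
  suff /negPf -> : lsh k != lsh j by rewrite mulr0.
  by rewrite -val_eqE /=.
- rewrite bt_lsh mul_c linear_sum big1 // => k _; rewrite linearZ /= coord_lsh.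
  suff /negPf -> : lsh k != rsh j by rewrite mulr0.
  by rewrite -val_eqE /= neq_ltn (leq_trans (ltn_ord k)) ?leq_addr.
- rewrite bt_rsh mul_c_g linear_sum big1 // => k _; rewrite linearZ /= coord_rsh.
  suff /negPf -> : rsh k != lsh j by rewrite mulr0.
  by rewrite -val_eqE /= neq_ltn (leq_trans (ltn_ord j)) ?leq_addr ?orbT.
- rewrite bt_rsh mul_c_g linear_sum (bigD1 j) //= linearZ /= coord_rsh eqxx mulr1.
  rewrite big1 ?addr0 // => k kj; rewrite linearZ /= coord_rsh.
  suff /negPf -> : rsh k != rsh j by rewrite mulr0.
  by rewrite -val_eqE /= eqn_add2l.
Qed.

End SplitNorm.

(* Adjoining to a subfield K a square root g of an element of K gives a
   quadratic extension K(g) = K + Kg; choosing a K(g)-basis (x_i) of L,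
   U = sum_i K x_i satisfies L = U + Ug, hence norms of elements of K are
   squares. *)
Section SqrtComplement.
Variables (F : fieldType) (L : fieldExtType F) (K : {subfield L}) (g : L).
Hypotheses (gK : g \notin K) (g2K : g ^+ 2 \in K).

Let g_nz : g != 0.
Proof. by apply: contraNneq gK => ->; exact: mem0v. Qed.

Lemma adjoin_degree_sqrt : adjoin_degree K g = 2%N.
Proof.
have size_p : size ('X^2 - (g ^+ 2)%:P : {poly L}) = 3%N.
  by rewrite size_polyDl ?size_polyXn // size_polyN size_polyC; case: (_ != 0).
have p_nz : ('X^2 - (g ^+ 2)%:P : {poly L}) != 0.
  by rewrite -size_poly_eq0 size_p.
have : minPoly K g %| 'X^2 - (g ^+ 2)%:P.
  apply: minPoly_dvdp; first by rewrite rpredB ?rpredX ?polyOverX // polyOverC.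
  by rewrite /root !hornerE subrr.
move/(dvdp_leq p_nz); rewrite size_p size_minPoly ltnS.
have := adjoin_deg_eq1 K g; rewrite (negPf gK) /adjoin_degree.
by case: (\dim_K _).-1 => [|[|k]].
Qed.

Lemma Fadjoin_sqrt : (<<K; g>> <= K + K * <[g]>)%VS.
Proof.
rewrite Fadjoin_eq_sum /Fadjoin_sum adjoin_degree_sqrt big_ord_recr big_ord1 /=.
by rewrite expr0 expr1 prodv1.
Qed.

Lemma sqrt_complement : exists2 U : {vspace L}, (K * U <= U)%VS &
  (U :&: U * <[g]> = 0)%VS /\ \dim {:L} = (\dim U + \dim U)%N.
Proof.
pose K2 := <<K; g>>%AS.
have [X [_ nzX] [defL dxL]] := field_module_semisimple (subvf (K2 * fullv)).
move: X nzX defL dxL; set r := \dim_K2 fullv => X nzX defL dxL.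
pose U := (\sum_(i < r) K * <[X`_i]>)%VS.
have X_nz (i : 'I_r) : X`_i != 0.
  by apply: contraNneq nzX => <-; rewrite mem_nth // size_tuple.
have dimL : \dim {:L} = (r * (2 * \dim K))%N.
  rewrite -{1}defL (directvP dxL) /=.
  under eq_bigr => i _ do rewrite dim_cosetv // dim_Fadjoin adjoin_degree_sqrt.
  by rewrite sum_nat_const card_ord.
have dimU : (\dim U <= r * \dim K)%N.
  apply: leq_trans (dimv_leq_sum _ _ _) _.
  under eq_bigr => i _ do rewrite dim_cosetv //.
  by rewrite sum_nat_const card_ord.
have dimUg : \dim (U * <[g]>) = \dim U := dim_cosetv U g_nz.
have cover : (fullv <= U + U * <[g]>)%VS.
  rewrite -defL; apply/subv_sumP => i _.
  apply: subv_trans (prodvSl _ Fadjoin_sqrt) _.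
  rewrite prodvDl; apply: addvS; first exact: (sumv_sup i).
  by rewrite prodvAC; apply: prodvSl; exact: (sumv_sup i).
have dimL_le := dimvS cover.
have dimUUg_le := (dimv_add_leqif U (U * <[g]>)).1.
have dimU_eq : \dim U = (r * \dim K)%N.
  apply/eqP; rewrite eqn_leq dimU -(leq_pmul2l (isT : (0 < 2)%N)) mulnCA -dimL.
  by rewrite (leq_trans dimL_le) // (leq_trans dimUUg_le) // dimUg addnn -mul2n.
exists U.
  rewrite {1}/U big_distrr /=; apply/subv_sumP => i _.
  by rewrite prodvA prodv_id; exact: (sumv_sup i).
split; last by rewrite dimL dimU_eq addnn -mul2n mulnCA.
apply/eqP; rewrite -subv0 -(dimv_add_leqif U (U * <[g]>)).2 eqn_leq dimUUg_le /=.
by rewrite (leq_trans _ dimL_le) // dimL dimUg dimU_eq addnn -mul2n mulnCA.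
Qed.

Lemma fieldNorm_sqrt_square (c : L) : c \in K -> exists z : F, fieldNorm c = z ^+ 2.
Proof.
move=> cK; have [U KU [dxU dimL]] := sqrt_complement.
apply: fieldNorm_split_square g_nz dxU dimL _ => v vU.
by rewrite mulrC; apply: (subvP KU); exact: memv_mul.
Qed.

End SqrtComplement.

(* Norms of multipliers.  Let S be the F-span of the squares s_t = e_t^2
   of an F-basis (e_t) of L; in characteristic 2 it contains every square
   and is therefore a subfield of L. *)
Section NormOfMultiplier.
Variables (F : fieldType) (L : fieldExtType F).
Hypothesis two0 : (2%:R : F) = 0.

Let e := vbasis {:L}.
Let s := map_tuple (fun x : L => x ^+ 2) e.
Let S := <<s>>%VS.

Let s_nth (t : 'I_(\dim {:L})) : s`_t = e`_t ^+ 2.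
Proof. by rewrite /= (nth_map 0) // size_tuple. Qed.

Let sqr_coord (z : L) : z ^+ 2 = \sum_t coord e t z ^+ 2 *: s`_t.
Proof.
rewrite {1}(coord_vbasis (memvf z)) (sqr_sum_char2 (char2_fieldExt two0)).
by apply: eq_bigr => t _; rewrite exprZn s_nth.
Qed.

Let memv_sqr (z : L) : z ^+ 2 \in S.
Proof.
rewrite sqr_coord; apply: memv_suml => t _; apply: memvZ; apply: memv_span.
by apply: mem_nth; rewrite size_tuple.
Qed.

Let sqr_span_aspace : is_aspace S.
Proof.
have mulS : (S * S <= S)%VS.
  apply/prodvP => u v uS vS.
  rewrite (coord_span uS) mulr_suml; apply: memv_suml => i _.
  rewrite -scalerAl; apply: memvZ.
  rewrite (coord_span vS) mulr_sumr; apply: memv_suml => k _.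
  by rewrite -scalerAr; apply: memvZ; rewrite !s_nth -exprMn memv_sqr.
by rewrite /is_aspace mulS andbT has_algid1 // -(expr1n L 2) memv_sqr.
Qed.

Variables (n : nat) (a : 'I_n -> F).

Let value_coord (y : 'I_n -> L) : \sum_k y k ^+ 2 * (a k)%:A =
  \sum_t (\sum_k coord e t (y k) ^+ 2 * a k) *: s`_t.
Proof.
under eq_bigr => k _ do rewrite mulr_algr sqr_coord scaler_sumr.
rewrite exchange_big /=; apply: eq_bigr => t _.
by rewrite scaler_suml; apply: eq_bigr => k _; rewrite scalerA mulrC.
Qed.

(* When (s_t) is a basis, the matrix of a multiplier c of q_L in this
   basis has multipliers of q as entries, hence so has its determinant. *)
Lemma fieldNorm_mult_sqr_basis (c : L) : basis_of fullv s ->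
  ts_mult (fun i => (a i)%:A) c -> ts_mult a (fieldNorm c).
Proof.
move=> sB hc; rewrite (fieldNorm_basis c sB); apply: (ts_mult_det two0) => i l.
rewrite mxof_entry lfunE /= => j; have [y hy] := hc j.
have -> : coord s l (s`_i * c) * a j = coord s l (s`_i * (c * (a j)%:A)).
  by rewrite mulr_algr -scalerAr linearZ /= mulrC.
rewrite hy mulr_sumr.
under eq_bigr => k _ do rewrite s_nth mulrA -exprMn.
rewrite value_coord coord_sum_free ?(basis_free sB) //.
by exists (fun k => coord e l (e`_i * y k)).
Qed.

(* Otherwise S is a proper subfield; a multiplier c of q_L lies in S
   (unless q = 0), and any g outside S has its square in S, so N(c) is a
   square, hence a multiplier of q. *)
Lemma fieldNorm_ts_mult (c : L) :
  ts_mult (fun i => (a i)%:A) c -> ts_mult a (fieldNorm c).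
Proof.
move=> hc; have [sB | sNB] := boolP (basis_of fullv s).
  exact: fieldNorm_mult_sqr_basis.
have [a0 | /forallPn[j0 aj0_nz]] := boolP [forall j, a j == 0].
  by move=> j; rewrite (eqP (forallP a0 j)) mulr0; exact: ts_value0.
have /subvPn[g _ gNS] : ~~ (fullv <= S)%VS.
  by apply: contra sNB => fS; rewrite basisEdim fS size_tuple leqnn.
pose KS : {subfield L} := ASpace sqr_span_aspace.
have cS : c \in KS.
  have [y hy] := hc j0.
  have cajS : c * (a j0)%:A \in S.
    by rewrite hy; apply: memv_suml => k _; rewrite mulr_algr memvZ ?memv_sqr.
  have -> : c = (a j0)^-1 *: (c * (a j0)%:A).
    by rewrite mulr_algr scalerA mulVf // scale1r.
  exact: memvZ.
have [z ->] := fieldNorm_sqrt_square (K := KS) gNS (memv_sqr g) cS.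
exact: ts_mult_sqr.
Qed.

End NormOfMultiplier.

Unset Implicit Arguments.

Theorem corollary7p2 (F : fieldType) (L : fieldExtType F) (n : nat) (a : 'I_n -> F) :
  (2%N \in [pchar F]) ->
  forall c : L, simFactor (fun i => (a i)%:A) c ->
    simFactor a (fieldNorm c).
Proof.
move=> charF2 c simc; have two0 : (2%:R : F) = 0 := pcharf0 charF2.
have [cnz _] := simc.
have [c_mult cV_mult] := ts_mult_of_simFactor (char2_fieldExt two0) simc.
have [Nc_nz NcV] := fieldNormV cnz.
have Nc_mult := fieldNorm_ts_mult two0 c_mult.
have NcV_mult := fieldNorm_ts_mult two0 cV_mult.
by apply: (simFactor_of_mult two0 Nc_nz) => //; rewrite -NcV.
Qed.
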